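(* Assume either that $g$ satisfies A1–A4 (and $\mathfrak{D}\subset\mathbb{R}^{m\times d}$ is arbitrary), or that $(g,\mathfrak{D})$ satisfy B1–B4. Then for every $X\in\mathbb{R}^{m\times n}$ and all $D,D'\in\mathfrak{D}$, $$|F_X(D)-F_X(D')|\le L_X(\bar g)\,\|D-D'\|_{1\to2}.$$
   Context: A penalty is a function $g:\mathbb{R}^d\to\mathbb{R}\cup\{+\infty\}$. $\mathcal{L}_x(D,\alpha)=\tfrac12\|x-D\alpha\|_2^2+g(\alpha)$, $f_x(D)=\inf_\alpha\mathcal{L}_x(D,\alpha)$, $F_X(D)=\frac1n\sum_i f_{x_i}(D)$ for $X=[x_1,\dots,x_n]$. $\|\Delta\|_{1\to2}=\max_j\|\delta_j\|_2$. A1: $g\ge0$; A2: $g$ lower semi-continuous; A3: $g(\alpha)\to+\infty$ as $\|\alpha\|\to\infty$; A4: $g(0)=0$. B1: $g=\chi_{\mathcal K}$ is the indicator of a set $\mathcal K$ ($0$ on $\mathcal K$, $+\infty$ outside); B2: there is $\kappa>0$ with $\kappa\|\alpha\|_1^2\le\|D\alpha\|_2^2$ for all $\alpha\in\mathcal K$, $D\in\mathfrak{D}$; B3: $0\in\mathcal K$; B4: $\mathfrak{D}$ convex. $\bar g(t)=\sup\{\|\alpha\|_1: g(\alpha)\le t\}$ under A1–A4, and $\bar g(t)=2\sqrt{2t/\kappa}$ under B1–B4. $L_X(\bar g)=\frac1n\sum_i\|x_i\|_2\,\bar g(\|x_i\|_2^2/2)$. *)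

From mathcomp Require Import ssreflect ssrfun ssrbool eqtype ssrnat seq fintype.
From Stdlib Require Import Reals ClassicalEpsilon.
Open Scope R_scope.

Inductive Rbar : Type := Fin (r : R) | PInf.

Definition Rbar_le_R (a : Rbar) (t : R) : Prop :=
  match a with Fin r => r <= t | PInf => False end.
Definition R_lt_Rbar (t : R) (a : Rbar) : Prop :=
  match a with Fin r => t < r | PInf => True end.

Definition vec (n : nat) := 'I_n -> R.
Definition mat (m n : nat) := 'I_m -> 'I_n -> R.

Definition sumI {n : nat} (f : 'I_n -> R) : R := foldr Rplus 0 (map f (enum 'I_n)).
Definition maxI {n : nat} (f : 'I_n -> R) : R := foldr Rmax 0 (map f (enum 'I_n)).

Definition norm2 {n : nat} (v : vec n) : R := sqrt (sumI (fun i => v i ^ 2)).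
Definition norm1 {n : nat} (v : vec n) : R := sumI (fun i => Rabs (v i)).

Definition vsub {n : nat} (u v : vec n) : vec n := fun i => u i - v i.
Definition vzero (n : nat) : vec n := fun _ => 0.
Definition msub {m n : nat} (A B : mat m n) : mat m n := fun i j => A i j - B i j.
Definition mulmv {m d : nat} (D : mat m d) (a : vec d) : vec m :=
  fun i => sumI (fun j => D i j * a j).
Definition column {m n : nat} (A : mat m n) (j : 'I_n) : vec m := fun i => A i j.

(* ||Δ||_{1->2} = max_j ||δ_j||_2 (0 when d = 0) *)
Definition norm12 {m d : nat} (A : mat m d) : R := maxI (fun j => norm2 (column A j)).

Definition Lcal {m d : nat} (g : vec d -> Rbar) (x : vec m) (D : mat m d) (a : vec d)
  : Rbar :=
  match g a with
  | Fin r => Fin (/2 * (norm2 (vsub x (mulmv D a))) ^ 2 + r)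
  | PInf => PInf
  end.

Definition is_glb (S : R -> Prop) (r : R) : Prop :=
  (forall v, S v -> r <= v) /\ (forall b, (forall v, S v -> b <= v) -> b <= r).

(* f_x(D) = inf_α L_x(D, α)  (infimum of the finite values; under the
   hypotheses a finite value exists since g(0)=0 / 0 ∈ K) *)
Definition f_x {m d : nat} (g : vec d -> Rbar) (x : vec m) (D : mat m d) : R :=
  epsilon (inhabits 0) (is_glb (fun v => exists a, Lcal g x D a = Fin v)).

Definition F_X {m d n : nat} (g : vec d -> Rbar) (X : mat m n) (D : mat m d) : R :=
  / INR n * sumI (fun k => f_x g (column X k) D).

Definition gbarA {d : nat} (g : vec d -> Rbar) (t : R) : R :=
  epsilon (inhabits 0)
    (is_lub (fun s => exists a, Rbar_le_R (g a) t /\ s = norm1 a)).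

Definition gbarB (kappa t : R) : R := 2 * sqrt (2 * t / kappa).

Definition L_X {m n : nat} (gbar : R -> R) (X : mat m n) : R :=
  / INR n * sumI (fun k => norm2 (column X k) * gbar (norm2 (column X k) ^ 2 / 2)).

Definition hypA1 {d : nat} (g : vec d -> Rbar) : Prop :=
  forall a, match g a with Fin r => 0 <= r | PInf => True end.
(* lower semi-continuity: {α | t < g α} is open for every real t *)
Definition hypA2 {d : nat} (g : vec d -> Rbar) : Prop :=
  forall a t, R_lt_Rbar t (g a) ->
    exists delta, 0 < delta /\
      forall b, norm2 (vsub b a) < delta -> R_lt_Rbar t (g b).
(* coercivity: g(α) -> +oo as ||α|| -> oo *)
Definition hypA3 {d : nat} (g : vec d -> Rbar) : Prop :=
  forall M, exists Rr, forall a, Rr < norm2 a -> R_lt_Rbar M (g a).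
Definition hypA4 {d : nat} (g : vec d -> Rbar) : Prop := g (vzero d) = Fin 0.

Definition hypB1 {d : nat} (g : vec d -> Rbar) (K : vec d -> Prop) : Prop :=
  forall a, g a = (match excluded_middle_informative (K a) with
                   | left _ => Fin 0 | right _ => PInf end).
Definition hypB2 {m d : nat} (K : vec d -> Prop) (kappa : R) (Dset : mat m d -> Prop)
  : Prop :=
  0 < kappa /\
  forall a D, K a -> Dset D -> kappa * (norm1 a) ^ 2 <= (norm2 (mulmv D a)) ^ 2.
Definition hypB3 {d : nat} (K : vec d -> Prop) : Prop := K (vzero d).
Definition hypB4 {m d : nat} (Dset : mat m d -> Prop) : Prop :=
  forall D D' t, Dset D -> Dset D' -> 0 <= t <= 1 ->
    Dset (fun i j => t * D i j + (1 - t) * D' i j).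

(* Fix a signal x and write ρ_D(α) = ||x - Dα||_2, so that
   L_x(D,α) = ρ_D(α)^2/2 + g(α).  Since ||(D - D')α||_2 <= ||α||_1 ||D - D'||_{1->2},
   every α gives f_x(D') <= (ρ_D(α) + ||α||_1 N)^2/2 + g(α) with N = ||D - D'||_{1->2}.
   Taking for α an ε-minimiser of L_x(D,.) whose value does not exceed
   L_x(D,0) = ||x||^2/2 (it exists because g(0) = 0), we get ρ_D(α) <= ||x|| and
   g(α) <= ||x||^2/2; the hypotheses (A1-A4, resp. B1-B3) then give
   ||α||_1 <= G := ḡ(||x||^2/2), hence the local quadratic bound
       f_x(D') <= f_x(D) + ||x|| G N + G^2 N^2 / 2.
   No minimiser is needed.
   A local bound of the form c N + K N^2 on a convex set of dictionaries
   integrates along segments (subdivide and let the mesh go to 0) into the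
   global Lipschitz bound |f_x(D) - f_x(D')| <= c N, and averaging over the
   columns of X gives the theorem. *)

From mathcomp Require Import ssreflect ssrfun ssrbool eqtype ssrnat seq fintype.
From Stdlib Require Import Reals ClassicalEpsilon Lra Psatz Lia FunctionalExtensionality.
Open Scope R_scope.

Definition sumL {T : Type} (l : seq T) (f : T -> R) : R := foldr Rplus 0 (map f l).

Lemma sumI_sumL n (f : 'I_n -> R) : sumI f = @sumL 'I_n (enum 'I_n) f.
Proof. by []. Qed.

Section ListSums.
Context {T : Type}.
Implicit Types (l : seq T) (f h : T -> R).

Lemma sumL_cons a l f : sumL (a :: l) f = f a + sumL l f.
Proof. by []. Qed.

Lemma sumL_ext l f h : (forall x, f x = h x) -> sumL l f = sumL l h.
Proof. by move=> fh; elim: l => [|a l IH] //; rewrite !sumL_cons IH fh. Qed.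

Lemma sumL_add l f h : sumL l (fun x => f x + h x) = sumL l f + sumL l h.
Proof. elim: l => [|a l IH]; rewrite ?sumL_cons ?IH /=; [rewrite /sumL /=|]; lra. Qed.

Lemma sumL_scal l c f : sumL l (fun x => c * f x) = c * sumL l f.
Proof. elim: l => [|a l IH]; rewrite ?sumL_cons ?IH; [rewrite /sumL /=|]; lra. Qed.

Lemma sumL_sub l f h : sumL l (fun x => f x - h x) = sumL l f - sumL l h.
Proof. elim: l => [|a l IH]; rewrite ?sumL_cons ?IH; [rewrite /sumL /=|]; lra. Qed.

Lemma sumL_le l f h : (forall x, f x <= h x) -> sumL l f <= sumL l h.
Proof.
move=> fh; elim: l => [|a l IH]; rewrite ?sumL_cons; first by rewrite /sumL /=; lra.
by have := fh a; lra.
Qed.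

Lemma sumL_nonneg l f : (forall x, 0 <= f x) -> 0 <= sumL l f.
Proof.
move=> f0; elim: l => [|a l IH]; rewrite ?sumL_cons; first by rewrite /sumL /=; lra.
by have := f0 a; lra.
Qed.

Lemma sumL_abs l f : Rabs (sumL l f) <= sumL l (fun x => Rabs (f x)).
Proof.
elim: l => [|a l IH]; rewrite ?sumL_cons; first by rewrite /sumL /= Rabs_R0; lra.
by have := Rabs_triang (f a) (sumL l f); lra.
Qed.

Lemma sumL_CS l f h :
  sumL l (fun x => f x * h x) <=
  sqrt (sumL l (fun x => f x ^ 2)) * sqrt (sumL l (fun x => h x ^ 2)).
Proof.
elim: l => [|a l IH]; first by rewrite /sumL /= sqrt_0; lra.
rewrite !sumL_cons.
set S := sumL l (fun x => f x ^ 2) in IH *; set U := sumL l (fun x => h x ^ 2) in IH *.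
have S0 : 0 <= S by apply: sumL_nonneg => x; apply: pow2_ge_0.
have U0 : 0 <= U by apply: sumL_nonneg => x; apply: pow2_ge_0.
have := sqrt_sqrt _ S0; have := sqrt_sqrt _ U0; have := sqrt_pos S; have := sqrt_pos U.
move=> U_ge0 S_ge0 UU SS.
have Sa : 0 <= f a ^ 2 + S by have := pow2_ge_0 (f a); lra.
have Ua : 0 <= h a ^ 2 + U by have := pow2_ge_0 (h a); lra.
rewrite -sqrt_mult //.
apply: (Rle_trans _ (f a * h a + sqrt S * sqrt U)); first lra.
apply: Rle_trans (Rle_abs _) _; rewrite -sqrt_Rsqr_abs; apply: sqrt_le_1_alt.
have := pow2_ge_0 (f a * sqrt U - h a * sqrt S); rewrite /Rsqr; nra.
Qed.
End ListSums.

Lemma sumL_mem {T : eqType} (l : seq T) f x :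
  (forall y, 0 <= f y) -> x \in l -> f x <= sumL l f.
Proof.
move=> f0; elim: l => [|a l IH] //; rewrite in_cons sumL_cons => /orP [/eqP ->|xl].
- by have := sumL_nonneg l f f0; lra.
- by have := IH xl; have := f0 a; lra.
Qed.

Lemma sumI_nonneg {n} (f : 'I_n -> R) : (forall i, 0 <= f i) -> 0 <= sumI f.
Proof. exact: sumL_nonneg. Qed.

Lemma le_of_sq_le a b : 0 <= b -> a ^ 2 <= b ^ 2 -> a <= b.
Proof. move=> b0 ab; case: (Rle_lt_dec a b) => [//|ba]; nra. Qed.

Lemma norm2_nonneg {n} (v : vec n) : 0 <= norm2 v.
Proof. exact: sqrt_pos. Qed.

Lemma norm2_sq {n} (v : vec n) : norm2 v ^ 2 = sumI (fun i => v i ^ 2).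
Proof. by rewrite /norm2 pow2_sqrt //; apply: sumI_nonneg => i; apply: pow2_ge_0. Qed.

Lemma norm1_nonneg {n} (v : vec n) : 0 <= norm1 v.
Proof. by apply: sumI_nonneg => i; apply: Rabs_pos. Qed.

Lemma norm2_ext {n} (u v : vec n) : (forall i, u i = v i) -> norm2 u = norm2 v.
Proof. by move=> uv; rewrite (functional_extensionality u v uv). Qed.

Lemma coord_le_norm2 {n} (v : vec n) j : Rabs (v j) <= norm2 v.
Proof.
apply: le_of_sq_le; first exact: norm2_nonneg.
rewrite norm2_sq pow2_abs; apply: (sumL_mem _ (fun i => v i ^ 2)); last by rewrite mem_enum.
by move=> i; apply: pow2_ge_0.
Qed.

Lemma norm2_scal {n} c (v : vec n) : norm2 (fun i => c * v i) = Rabs c * norm2 v.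
Proof.
rewrite /norm2 -(sqrt_pow2 (Rabs c)) ?pow2_abs; last exact: Rabs_pos.
rewrite -sqrt_mult; first last.
- by apply: sumI_nonneg => i; apply: pow2_ge_0.
- exact: pow2_ge_0.
by rewrite !sumI_sumL -sumL_scal; congr sqrt; apply: sumL_ext => i; ring.
Qed.

Lemma norm2_add {n} (u v : vec n) : norm2 (fun i => u i + v i) <= norm2 u + norm2 v.
Proof.
apply: le_of_sq_le; first by have := norm2_nonneg u; have := norm2_nonneg v; lra.
have expand : sumI (fun i => (u i + v i) ^ 2) =
  sumI (fun i => u i ^ 2) + 2 * sumI (fun i => u i * v i) + sumI (fun i => v i ^ 2).
{ by rewrite !sumI_sumL -sumL_scal -!sumL_add; apply: sumL_ext => i; ring. }
rewrite norm2_sq expand -(norm2_sq u) -(norm2_sq v).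
have cs : sumI (fun i => u i * v i) <= norm2 u * norm2 v := sumL_CS _ u v.
nra.
Qed.

Lemma norm2_vsub_sym {n} (u v : vec n) : norm2 (vsub u v) = norm2 (vsub v u).
Proof.
rewrite -[norm2 (vsub v u)]Rmult_1_l -Rabs_R1 -Rabs_Ropp -norm2_scal.
by apply: norm2_ext => i; rewrite /vsub; ring.
Qed.

Lemma norm2_le_sub_add {n} (u v : vec n) : norm2 u <= norm2 (vsub u v) + norm2 v.
Proof.
have := norm2_add (vsub u v) v.
by rewrite (norm2_ext (fun i => vsub u v i + v i) u) // => i; rewrite /vsub; ring.
Qed.

Lemma norm2_sumL {n} {T : Type} (l : seq T) (F : T -> vec n) :
  norm2 (fun i => sumL l (fun j => F j i)) <= sumL l (fun j => norm2 (F j)).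
Proof.
elim: l => [|a l IH].
- rewrite (norm2_ext _ (fun i => 0 * 0)) ?norm2_scal ?Rabs_R0 /sumL /=; first lra.
  by move=> i; ring.
- apply: Rle_trans (norm2_add (F a) (fun i => sumL l (fun j => F j i))) _.
  by rewrite sumL_cons; lra.
Qed.

Lemma maxL_nonneg {T : Type} (l : seq T) f : 0 <= foldr Rmax 0 (map f l).
Proof. elim: l => [|a l IH] /=; first lra. by apply: Rle_trans IH (Rmax_r _ _). Qed.

Lemma maxL_mem {T : eqType} (l : seq T) f x : x \in l -> f x <= foldr Rmax 0 (map f l).
Proof.
elim: l => [|a l IH] //=; rewrite in_cons => /orP [/eqP ->|xl]; first exact: Rmax_l.
by apply: Rle_trans (IH xl) (Rmax_r _ _).
Qed.

Lemma maxL_scal {T : Type} (l : seq T) f c : 0 <= c ->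
  foldr Rmax 0 (map (fun x => c * f x) l) = c * foldr Rmax 0 (map f l).
Proof.
move=> c0; elim: l => [|a l IH] /=; first ring.
by rewrite IH /Rmax; do 2 case: Rle_dec => //; nra.
Qed.

Lemma norm12_nonneg {m d} (A : mat m d) : 0 <= norm12 A.
Proof. exact: maxL_nonneg. Qed.

Lemma column_le_norm12 {m d} (A : mat m d) j : norm2 (column A j) <= norm12 A.
Proof. by apply: (maxL_mem _ (fun j => norm2 (column A j))); rewrite mem_enum. Qed.

Lemma norm12_scal {m d} c (A : mat m d) : norm12 (fun i j => c * A i j) = Rabs c * norm12 A.
Proof.
rewrite /norm12 /maxI -maxL_scal; last exact: Rabs_pos.
by congr (foldr _ _); apply: eq_map => j; rewrite -norm2_scal.
Qed.

(* The (1->2) norm bounds the matrix–vector product: Aα is a combination of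
   the columns of A with weights α_j. *)
Lemma mulmv_bound {m d} (A : mat m d) (a : vec d) :
  norm2 (mulmv A a) <= norm1 a * norm12 A.
Proof.
have -> : norm2 (mulmv A a) =
          norm2 (fun i => sumL (enum 'I_d) (fun j => a j * column A j i)).
{ by apply: norm2_ext => i; apply: sumL_ext => j; rewrite /column; ring. }
apply: Rle_trans (norm2_sumL _ (fun j i => a j * column A j i)) _.
rewrite /norm1 sumI_sumL Rmult_comm -sumL_scal; apply: sumL_le => j.
rewrite norm2_scal Rmult_comm; apply: Rmult_le_compat_r; first exact: Rabs_pos.
exact: column_le_norm12.
Qed.

Definition residual {m d} (x : vec m) (D : mat m d) (a : vec d) : R :=
  norm2 (vsub x (mulmv D a)).

Lemma residual_perturb {m d} x (D D' : mat m d) a :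
  residual x D' a <= residual x D a + norm1 a * norm12 (msub D D').
Proof.
have -> : residual x D' a =
          norm2 (fun i => vsub x (mulmv D a) i + mulmv (msub D D') a i).
{ apply: norm2_ext => i; rewrite /vsub /mulmv /msub !sumI_sumL.
  rewrite (sumL_ext _ (fun j => (D i j - D' i j) * a j)
                      (fun j => D i j * a j - D' i j * a j)); last by move=> j; ring.
  by rewrite sumL_sub; ring. }
apply: Rle_trans (norm2_add _ _) _.
by have := mulmv_bound (msub D D') a; rewrite /residual; lra.
Qed.

Lemma glb_exists (S : R -> Prop) :
  (exists v, S v) -> (forall v, S v -> 0 <= v) -> exists r, is_glb S r.
Proof.
move=> [v0 Sv0] S_ge0.
have bnd : bound (fun y => S (- y)) by exists 0 => y Sy; have := S_ge0 _ Sy; lra.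
have ne : exists y, S (- y) by exists (- v0); rewrite Ropp_involutive.
have [l [ub lub]] := completeness _ bnd ne.
exists (- l); split=> [v Sv | b lb].
- have : - v <= l by apply: ub; rewrite Ropp_involutive.
  lra.
- have : l <= - b by apply: lub => y Sy; have := lb _ Sy; lra.
  lra.
Qed.

Lemma Lcal_Fin {m d} (g : vec d -> Rbar) x (D : mat m d) a v :
  Lcal g x D a = Fin v <->
  exists r, g a = Fin r /\ v = / 2 * residual x D a ^ 2 + r.
Proof.
rewrite /Lcal /residual; case: (g a) => [r|]; last by split=> [|[r []]].
by split=> [[<-]|[r' [[<-] ->]]]; first exists r.
Qed.

Section Infimum.
Context {m d : nat} (g : vec d -> Rbar).
Hypothesis g_nonneg : hypA1 g.
Hypothesis g_zero : hypA4 g.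

(* f_x(D) is the infimum of the finite values of L_x(D, .); it is well
   defined because α = 0 gives a finite value and all values are >= 0. *)
Lemma f_x_glb x (D : mat m d) :
  is_glb (fun v => exists a, Lcal g x D a = Fin v) (f_x g x D).
Proof.
rewrite /f_x; apply: epsilon_spec; apply: glb_exists.
- by exists (/ 2 * residual x D (vzero d) ^ 2 + 0), (vzero d); apply/Lcal_Fin; exists 0.
- move=> v [a /Lcal_Fin [r [ga ->]]]; have := g_nonneg a; rewrite ga.
  by have := pow2_ge_0 (residual x D a); lra.
Qed.

Lemma f_x_le x (D : mat m d) a r :
  g a = Fin r -> f_x g x D <= / 2 * residual x D a ^ 2 + r.
Proof. by move=> ga; apply: (proj1 (f_x_glb x D)); exists a; apply/Lcal_Fin; exists r. Qed.

Lemma residual_zero x (D : mat m d) : residual x D (vzero d) = norm2 x.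
Proof.
apply: norm2_ext => i; rewrite /vsub /mulmv /vzero sumI_sumL.
rewrite (sumL_ext _ _ (fun j => 0 * D i j)) ?sumL_scal; last by move=> j; ring.
ring.
Qed.

(* Comparing with α = 0: f_x(D) <= ||x||^2 / 2. *)
Lemma f_x_le_half x (D : mat m d) : f_x g x D <= / 2 * norm2 x ^ 2.
Proof. by have := f_x_le x D _ _ g_zero; rewrite residual_zero; lra. Qed.

Lemma f_x_approx x (D : mat m d) eps : 0 < eps ->
  exists a r, g a = Fin r /\ / 2 * residual x D a ^ 2 + r < f_x g x D + eps.
Proof.
move=> eps0; apply: NNPP => none.
suff : f_x g x D + eps <= f_x g x D by lra.
apply: (proj2 (f_x_glb x D)) => v [a /Lcal_Fin [r [ga ->]]].
by apply: Rnot_lt_le => lt; apply: none; exists a, r.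
Qed.

(* ε-minimisers can be chosen with value at most L_x(D, 0) = ||x||^2 / 2:
   either f_x(D) < ||x||^2/2 and a fine enough approximation works,
   or f_x(D) = ||x||^2/2 and α = 0 is itself a minimiser. *)
Lemma near_minimizer x (D : mat m d) eps : 0 < eps ->
  exists a r, g a = Fin r /\
    / 2 * residual x D a ^ 2 + r <= f_x g x D + eps /\
    / 2 * residual x D a ^ 2 + r <= / 2 * norm2 x ^ 2.
Proof.
move=> eps0; have f_le := f_x_le_half x D.
case: (Rlt_le_dec (f_x g x D) (/ 2 * norm2 x ^ 2)) => [f_lt | f_ge].
- have [a [r [ga approx]]] :=
    f_x_approx x D (Rmin eps (/ 2 * norm2 x ^ 2 - f_x g x D))
      ltac:(by apply: Rmin_glb_lt; lra).
  have := Rmin_l eps (/ 2 * norm2 x ^ 2 - f_x g x D).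
  have := Rmin_r eps (/ 2 * norm2 x ^ 2 - f_x g x D).
  by exists a, r; split=> //; split; lra.
- by exists (vzero d), 0; rewrite residual_zero; split=> //; split; lra.
Qed.

Lemma local_bound x (D D' : mat m d) G :
  (forall a r, g a = Fin r ->
     / 2 * residual x D a ^ 2 + r <= / 2 * norm2 x ^ 2 -> norm1 a <= G) ->
  f_x g x D' <= f_x g x D + norm2 x * G * norm12 (msub D D')
                 + G ^ 2 / 2 * norm12 (msub D D') ^ 2.
Proof.
move=> l1_bound; apply: Rle_plus_epsilon => eps eps0.
have [a [r [ga [near below]]]] := near_minimizer x D eps eps0.
set N := norm12 (msub D D'); set rho := residual x D a in near below *.
have N0 : 0 <= N := norm12_nonneg _.
have rho0 : 0 <= rho := norm2_nonneg _.
have r0 : 0 <= r by have := g_nonneg a; rewrite ga.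
have rho_le : rho <= norm2 x by apply: le_of_sq_le; [exact: norm2_nonneg | nra].
have a_le : norm1 a <= G := l1_bound a r ga below.
have a0 := norm1_nonneg a.
have moved : f_x g x D' <= / 2 * (rho + norm1 a * N) ^ 2 + r.
{ apply: Rle_trans (f_x_le x D' a r ga) _.
  have res0 : 0 <= residual x D' a := norm2_nonneg _.
  have := residual_perturb x D D' a; rewrite -/rho -/N => res_le; nra. }
have cross : rho * (norm1 a * N) <= norm2 x * (G * N) by apply: Rmult_le_compat; nra.
have quad : (norm1 a * N) ^ 2 <= (G * N) ^ 2 by apply: pow_incr; nra.
nra.
Qed.
End Infimum.

(* Case A: the codes with g(α) <= t form a bounded set containing 0, so ḡ(t)
   is their l1 supremum, which bounds every code of objective <= ||x||^2/2. *)
Section CaseA.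
Context {d : nat} (g : vec d -> Rbar).
Hypothesis g_coercive : hypA3 g.
Hypothesis g_zero : hypA4 g.

Lemma gbarA_spec t : 0 <= t ->
  is_lub (fun s => exists a, Rbar_le_R (g a) t /\ s = norm1 a) (gbarA g t).
Proof.
move=> t0; rewrite /gbarA; apply: epsilon_spec.
have bnd : bound (fun s => exists a, Rbar_le_R (g a) t /\ s = norm1 a).
{ have [M big] := g_coercive t.
  exists (sumI (fun _ : 'I_d => M)) => s [a [gat ->]].
  rewrite /norm1 !sumI_sumL; apply: sumL_le => j.
  apply: Rle_trans (coord_le_norm2 a j) _; apply: Rnot_lt_le => /big.
  by case: (g a) gat => [r|] //=; lra. }
have ne : exists s, exists a, Rbar_le_R (g a) t /\ s = norm1 a.
{ by exists (norm1 (vzero d)), (vzero d); rewrite g_zero. }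
by have [l lub] := completeness _ bnd ne; exists l.
Qed.

Lemma l1_bound_A {m} x (D : mat m d) a r : hypA1 g -> g a = Fin r ->
  / 2 * residual x D a ^ 2 + r <= / 2 * norm2 x ^ 2 ->
  norm1 a <= gbarA g (norm2 x ^ 2 / 2).
Proof.
move=> g_nonneg ga below; have x0 := pow2_ge_0 (norm2 x).
apply: (proj1 (gbarA_spec (norm2 x ^ 2 / 2) ltac:(lra))); exists a; split=> //.
by rewrite ga /=; have := pow2_ge_0 (residual x D a); lra.
Qed.
End CaseA.

(* Case B: g is the indicator of K, so finite values mean α ∈ K with g(α) = 0,
   and the restricted-isometry-type bound B2 turns ||Dα||_2 <= 2||x|| into
   ||α||_1 <= 2||x|| / sqrt κ = ḡ(||x||^2/2). *)
Section CaseB.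
Context {m d : nat} (g : vec d -> Rbar) (Dset : mat m d -> Prop)
        (K : vec d -> Prop) (kappa : R).
Hypothesis g_indicator : hypB1 g K.

Lemma indicator_Fin a r : g a = Fin r -> K a /\ r = 0.
Proof. by rewrite g_indicator; case: excluded_middle_informative => // Ka [<-]. Qed.

Lemma indicator_nonneg : hypA1 g.
Proof. by move=> a; rewrite g_indicator; case: excluded_middle_informative => _ //; lra. Qed.

Lemma indicator_zero : hypB3 K -> hypA4 g.
Proof. by move=> K0; rewrite /hypA4 g_indicator; case: excluded_middle_informative. Qed.

Lemma l1_bound_B x (D : mat m d) a r : hypB2 K kappa Dset -> Dset D -> g a = Fin r ->
  / 2 * residual x D a ^ 2 + r <= / 2 * norm2 x ^ 2 ->
  norm1 a <= gbarB kappa (norm2 x ^ 2 / 2).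
Proof.
move=> [kappa0 rip] DD ga below; have [Ka r0] := indicator_Fin a r ga.
have x0 := norm2_nonneg x; have n0 := norm1_nonneg a.
have res_le : residual x D a <= norm2 x.
{ apply: le_of_sq_le => //; rewrite r0 in below; lra. }
have Da_le : norm2 (mulmv D a) <= 2 * norm2 x.
{ have := norm2_le_sub_add (mulmv D a) x.
  by rewrite norm2_vsub_sym -/(residual x D a); lra. }
have kappa_n1 : kappa * norm1 a ^ 2 <= 4 * norm2 x ^ 2.
{ apply: Rle_trans (rip a D Ka DD) _.
  have := pow_incr _ _ 2 (conj (norm2_nonneg (mulmv D a)) Da_le); lra. }
have y0 : 0 <= 2 * (norm2 x ^ 2 / 2) / kappa.
{ by apply: Rmult_le_pos; [nra | apply: Rlt_le; apply: Rinv_0_lt_compat]. }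
apply: le_of_sq_le; first by have := sqrt_pos (2 * (norm2 x ^ 2 / 2) / kappa); rewrite /gbarB; lra.
rewrite /gbarB Rpow_mult_distr pow2_sqrt //.
have -> : norm1 a ^ 2 = kappa * norm1 a ^ 2 * / kappa by field; lra.
have -> : 2 ^ 2 * (2 * (norm2 x ^ 2 / 2) / kappa) = 4 * norm2 x ^ 2 * / kappa by field; lra.
by apply: Rmult_le_compat_r => //; apply: Rlt_le; apply: Rinv_0_lt_compat.
Qed.
End CaseB.

(* Integrating a local bound along a segment: if φ grows by at most
   A|s - t| + B(s - t)^2 between any two points of [0,1], then chaining over
   N equal steps gives φ(1) <= φ(0) + A + B/N, and N -> ∞ removes B. *)
Section Segment.
Variables (phi : R -> R) (A B : R).
Hypothesis B0 : 0 <= B.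
Hypothesis local : forall s t, 0 <= s <= 1 -> 0 <= t <= 1 ->
  phi s <= phi t + A * Rabs (s - t) + B * (s - t) ^ 2.

Lemma segment_chain (N : nat) : (1 <= N)%nat -> phi 1 <= phi 0 + A + B / INR N.
Proof.
move=> N1; have N0 : 0 < INR N by apply: lt_0_INR; apply/ltP.
set h := / INR N; have h0 : 0 < h by apply: Rinv_0_lt_compat.
have Nh : INR N * h = 1 by rewrite /h; field; lra.
have steps : forall k : nat, (k <= N)%nat ->
  phi (INR k * h) <= phi 0 + INR k * (A * h + B * h ^ 2).
{ elim=> [|k IH] kN; first by rewrite /= Rmult_0_l; lra.
  have := IH (ltnW kN); have := le_INR _ _ (elimT leP kN); have := pos_INR k.
  rewrite S_INR => k0 kN' IHk.
  have := local ((INR k + 1) * h) (INR k * h).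
  rewrite (_ : (INR k + 1) * h - INR k * h = h); last by ring.
  rewrite Rabs_right; last lra.
  move=> /(_ ltac:(split; nra) ltac:(split; nra)); nra. }
have := steps N (leqnn N); rewrite Nh.
have -> : INR N * (A * h + B * h ^ 2) = A + B / INR N by rewrite /h; field; lra.
lra.
Qed.

Lemma segment : phi 1 <= phi 0 + A.
Proof.
apply: Rle_plus_epsilon => eps eps0.
have [N NB] := INR_unbounded (B / eps + 1).
have N1 : (1 <= N)%nat.
{ case: N NB => [|N] //=; have := Rmult_le_pos _ _ B0 (Rlt_le _ _ (Rinv_0_lt_compat _ eps0)).
  rewrite /Rdiv; lra. }
have N0 : 0 < INR N by apply: lt_0_INR; apply/ltP.
suff : B / INR N <= eps by have := segment_chain N N1; lra.
apply: (Rmult_le_reg_r (INR N)) => //; rewrite /Rdiv Rmult_assoc Rinv_l; last lra.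
have : B = B / eps * eps by field; lra.
nra.
Qed.
End Segment.

(* The bound holds in both directions, since t ↦ φ(1 - t) satisfies the same
   hypothesis. *)
Lemma segment_abs (phi : R -> R) A B : 0 <= B ->
  (forall s t, 0 <= s <= 1 -> 0 <= t <= 1 ->
     phi s <= phi t + A * Rabs (s - t) + B * (s - t) ^ 2) ->
  Rabs (phi 1 - phi 0) <= A.
Proof.
move=> B0 local; have forward := segment phi A B B0 local.
have reversed : forall s t, 0 <= s <= 1 -> 0 <= t <= 1 ->
  phi (1 - s) <= phi (1 - t) + A * Rabs (s - t) + B * (s - t) ^ 2.
{ move=> s t s01 t01; have := local (1 - s) (1 - t) ltac:(lra) ltac:(lra).
  by rewrite (_ : 1 - s - (1 - t) = - (s - t)) ?Rabs_Ropp; [nra | ring]. }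
have := segment (fun t => phi (1 - t)) A B B0 reversed.
by rewrite /= Rminus_0_r Rminus_diag => backward; apply: Rabs_le; lra.
Qed.

(* On a convex set of dictionaries, a local bound c N + K N^2 for the increase
   of f over a step of (1->2)-size N yields the Lipschitz bound with constant c:
   apply [segment_abs] along the segment from D' to D. *)
Lemma lipschitz_of_local_bound {m d} (f : mat m d -> R) (P : mat m d -> Prop) c K :
  0 <= K -> hypB4 P ->
  (forall D D', P D -> f D' <= f D + c * norm12 (msub D D') + K * norm12 (msub D D') ^ 2) ->
  forall D D', P D -> P D' -> Rabs (f D - f D') <= c * norm12 (msub D D').
Proof.
move=> K0 convex local D D' PD PD'.
set N := norm12 (msub D D').
set Dt := fun t : R => (fun i j => t * D i j + (1 - t) * D' i j) : mat m d.
have step_size : forall s t, norm12 (msub (Dt t) (Dt s)) = Rabs (s - t) * N.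
{ move=> s t; rewrite Rabs_minus_sym -norm12_scal; congr norm12.
  by do 2 apply: functional_extensionality => ?; rewrite /msub /Dt; ring. }
have ends : Dt 1 = D /\ Dt 0 = D'.
{ by split; do 2 apply: functional_extensionality => ?; rewrite /Dt; ring. }
case: ends => <- <-; apply: segment_abs (fun t => f (Dt t)) _ (K * N ^ 2) _ _.
- by apply: Rmult_le_pos => //; apply: pow2_ge_0.
- move=> s t _ t01; have := local (Dt t) (Dt s) (convex _ _ _ PD PD' t01).
  by rewrite step_size Rpow_mult_distr pow2_abs; lra.
Qed.

Lemma F_X_lipschitz {m d n} (g : vec d -> Rbar) (gbar : R -> R) (X : mat m n)
    (D D' : mat m d) :
  (forall k, Rabs (f_x g (column X k) D - f_x g (column X k) D') <=
             norm2 (column X k) * gbar (norm2 (column X k) ^ 2 / 2) * norm12 (msub D D')) ->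
  Rabs (F_X g X D - F_X g X D') <= L_X gbar X * norm12 (msub D D').
Proof.
move=> column_bound.
have inv_n : 0 <= / INR n.
{ case: n X column_bound => [|n] X _; first by rewrite /= Rinv_0; lra.
  by apply: Rlt_le; apply: Rinv_0_lt_compat; apply: lt_0_INR; lia. }
rewrite /F_X /L_X -Rmult_minus_distr_l Rabs_mult Rabs_right; last lra.
rewrite Rmult_assoc; apply: Rmult_le_compat_l => //.
rewrite !sumI_sumL -sumL_sub Rmult_comm -sumL_scal.
apply: Rle_trans (sumL_abs _ _) _; apply: sumL_le => k.
by rewrite Rmult_comm; apply: column_bound.
Qed.

Theorem mainTheorem9 (m d : nat) (g : vec d -> Rbar) :
  (hypA1 g -> hypA2 g -> hypA3 g -> hypA4 g ->
     forall (n : nat) (X : mat m n) (D D' : mat m d),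
       Rabs (F_X g X D - F_X g X D') <= L_X (gbarA g) X * norm12 (msub D D'))
  /\
  (forall (Dset : mat m d -> Prop) (K : vec d -> Prop) (kappa : R),
     hypB1 g K -> hypB2 K kappa Dset -> hypB3 K -> hypB4 Dset ->
     forall (n : nat) (X : mat m n) (D D' : mat m d),
       Dset D -> Dset D' ->
       Rabs (F_X g X D - F_X g X D') <= L_X (gbarB kappa) X * norm12 (msub D D')).
Proof.
split.
- move=> g_nonneg _ g_coercive g_zero n X D D'; apply: F_X_lipschitz => k.
  set x := column X k; set G := gbarA g (norm2 x ^ 2 / 2).
  apply: (lipschitz_of_local_bound (f_x g x) (fun _ => True) _ (G ^ 2 / 2)) => //.
  + by have := pow2_ge_0 G; lra.
  + move=> D0 D1 _; apply: local_bound => // a r.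
    exact: (l1_bound_A g g_coercive g_zero x D0 a r g_nonneg).
- move=> Dset K kappa g_ind rip K0 convex n X D D' DD DD'; apply: F_X_lipschitz => k.
  set x := column X k; set G := gbarB kappa (norm2 x ^ 2 / 2).
  apply: (lipschitz_of_local_bound (f_x g x) Dset _ (G ^ 2 / 2)) => //.
  + by have := pow2_ge_0 G; lra.
  + move=> D0 D1 DD0; apply: local_bound.
    * exact: (indicator_nonneg g K g_ind).
    * exact: (indicator_zero g K g_ind K0).
    * by move=> a r; apply: (l1_bound_B g Dset K kappa g_ind x D0 a r rip DD0).
Qed.
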